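(* Let $P:\mathcal C^{op}\to\mathbf{Pos}$ and $Q:\mathcal D^{op}\to\mathbf{Pos}$ be doctrines and $(L,\lambda)\dashv(R,\rho)$ an adjunction in $\mathbf{IdxPos}$ with unit $\eta$ and counit $\epsilon$. Let $\mathsf K$ be the associated comonad on $Q$, with underlying comonad $(LR,L\eta R,\epsilon)$ on $\mathcal D$ and $\kappa=(\lambda R^{op})\cdot\rho$ (components $\kappa_Y=\lambda_{RY}\circ\rho_Y:QY\to Q(LRY)$); let $\mathcal D_K$ be the category of coalgebras for $(LR,L\eta R,\epsilon)$, $U:\mathcal D_K\to\mathcal D$ the forgetful functor, and $\square^{\mathsf K}$ the interior operator on $Q\circ U^{op}$ given by $\square^{\mathsf K}_{(Y,c)}=Q(c)\circ\lambda_{RY}\circ\rho_Y$. Let $\square^{\mathbb A}$ be the interior operator on $Q\circ L^{op}$ given by $\square^{\mathbb A}_X=\lambda_X\circ P(\eta_X)\circ\rho_{LX}$. Let $K:\mathcal C\to\mathcal D_K$ be the comparison functor $KX=(LX,L\eta_X)$, $Kf=Lf$ (so $U\circ K=L$). Then $(K,\mathrm{id}):(Q\circ L^{op},\square^{\mathbb A})\to(Q\circ U^{op},\square^{\mathsf K})$ is a 1-arrow in $\mathbf{IdxPos}$ and $\square^{\mathbb A}=\square^{\mathsf K}K$, i.e. $\square^{\mathbb A}_X=\square^{\mathsf K}_{KX}$ for every object $X$ of $\mathcal C$.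
   Context: A doctrine is a functor $P:\mathcal C^{op}\to\mathbf{Pos}$; for $t:X\to Y$, $P(t):PY\to PX$ is reindexing. In the 2-category $\mathbf{IdxPos}$, a 1-arrow $(F,f):P\to Q$ (with $P:\mathcal C^{op}\to\mathbf{Pos}$, $Q:\mathcal D^{op}\to\mathbf{Pos}$) is a functor $F:\mathcal C\to\mathcal D$ with a natural transformation $f:P\Rightarrow Q\circ F^{op}$; a 2-arrow $\theta:(F,f)\Rightarrow(F',f')$ is a natural transformation $\theta:F\Rightarrow F'$ with $f_X(\alpha)\le Q(\theta_X)(f'_X(\alpha))$ for all $X,\alpha$; composition of $(G,g)$ then $(F,f)$ is $(FG,(fG^{op})\cdot g)$ (components $f_{GX}\circ g_X$). An adjunction $(L,\lambda)\dashv(R,\rho)$ in $\mathbf{IdxPos}$ amounts to: $L\dashv R$ adjunction of categories with unit $\eta:\mathrm{Id}_{\mathcal C}\Rightarrow RL$ and counit $\epsilon:LR\Rightarrow\mathrm{Id}_{\mathcal D}$, natural $\lambda:P\Rightarrow QL^{op}$, $\rho:Q\Rightarrow PR^{op}$, with $\alpha\le P(\eta_X)(\rho_{LX}(\lambda_X\alpha))$ and $\lambda_{RY}(\rho_Y\beta)\le Q(\epsilon_Y)(\beta)$. An interior operator on a doctrine $M$ is a natural $\square:M\Rightarrow M$ with $\square_X\alpha\le\alpha$ and $\square_X\alpha\le\square_X\square_X\alpha$. Coalgebras for a comonad $(T,\delta,e)$ on $\mathcal D$ are $(Y,c:Y\to TY)$ with $e_Yc=\mathrm{id}$, $\delta_Yc=Tc\circ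 c$. *)

(* A category; composition [comp g f] is "g after f", with f : X -> Y, g : Y -> Z. *)
Record Category := {
  ob : Type;
  hom : ob -> ob -> Type;
  idm : forall X, hom X X;
  comp : forall X Y Z, hom Y Z -> hom X Y -> hom X Z;
  comp_id_l : forall X Y (f : hom X Y), comp X Y Y (idm Y) f = f;
  comp_id_r : forall X Y (f : hom X Y), comp X X Y f (idm X) = f;
  comp_assoc : forall X Y Z W (f : hom X Y) (g : hom Y Z) (h : hom Z W),
      comp X Z W h (comp X Y Z g f) = comp X Y W (comp Y Z W h g) f
}.
Arguments hom {c} X Y.
Arguments comp_id_l {c X Y} f.
Arguments comp_id_r {c X Y} f.
Arguments comp_assoc {c X Y Z W} f g h.
Arguments idm {c} X.
Arguments comp {c X Y Z} g f.

Record Functor (C D : Category) := {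
  fob : ob C -> ob D;
  fmap : forall X Y, hom X Y -> hom (fob X) (fob Y);
  fmap_id : forall X, fmap X X (idm X) = idm (fob X);
  fmap_comp : forall X Y Z (f : hom X Y) (g : hom Y Z),
      fmap X Z (comp g f) = comp (fmap Y Z g) (fmap X Y f)
}.
Arguments fob {C D} _ X.
Arguments fmap {C D} _ {X Y} h.

Record Poset := {
  pcar : Type;
  ple : pcar -> pcar -> Prop;
  ple_refl : forall a, ple a a;
  ple_trans : forall a b c, ple a b -> ple b c -> ple a c;
  ple_antisym : forall a b, ple a b -> ple b a -> a = b
}.
Arguments ple {p} a b.

(* A doctrine P : C^op -> Pos; [reidx P t] is P(t) : P Y -> P X for t : X -> Y. *)
Record Doctrine (C : Category) := {
  dob : ob C -> Poset;
  reidx : forall X Y, hom X Y -> pcar (dob Y) -> pcar (dob X);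
  reidx_mono : forall X Y (t : hom X Y) a b, ple a b -> ple (reidx X Y t a) (reidx X Y t b);
  reidx_id : forall X a, reidx X X (idm X) a = a;
  reidx_comp : forall X Y Z (f : hom X Y) (g : hom Y Z) a,
      reidx X Z (comp g f) a = reidx X Y f (reidx Y Z g a)
}.
Arguments dob {C} d X.
Arguments reidx {C} d {X Y} t a.

(* A natural transformation f : P => Q o F^op (the second component of a 1-arrow
   (F,f) : P -> Q in IdxPos): monotone components, natural in X. *)
Definition idx_nat {C D : Category} (P : Doctrine C) (Q : Doctrine D) (F : Functor C D)
  (f : forall X, pcar (dob P X) -> pcar (dob Q (fob F X))) : Prop :=
  (forall X a b, ple a b -> ple (f X a) (f X b)) /\
  (forall X Y (t : hom X Y) (b : pcar (dob P Y)),
      f X (reidx P t b) = reidx Q (fmap F t) (f Y b)).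

Definition IdxAdjunction {C D : Category} (P : Doctrine C) (Q : Doctrine D)
  (L : Functor C D) (R : Functor D C)
  (eta : forall X, hom X (fob R (fob L X)))
  (eps : forall Y, hom (fob L (fob R Y)) Y)
  (lam : forall X, pcar (dob P X) -> pcar (dob Q (fob L X)))
  (rho : forall Y, pcar (dob Q Y) -> pcar (dob P (fob R Y))) : Prop :=
  (forall X X' (f : hom X X'), comp (fmap R (fmap L f)) (eta X) = comp (eta X') f) /\
  (forall Y Y' (g : hom Y Y'), comp g (eps Y) = comp (eps Y') (fmap L (fmap R g))) /\
  (forall X, comp (eps (fob L X)) (fmap L (eta X)) = idm (fob L X)) /\
  (forall Y, comp (fmap R (eps Y)) (eta (fob R Y)) = idm (fob R Y)) /\
  idx_nat P Q L lam /\ idx_nat Q P R rho /\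
  (* the 2-cells eta and eps *)
  (forall X (a : pcar (dob P X)), ple a (reidx P (eta X) (rho (fob L X) (lam X a)))) /\
  (forall Y (b : pcar (dob Q Y)), ple (lam (fob R Y) (rho Y b)) (reidx Q (eps Y) b)).

Definition cmd_delta {C D : Category} (L : Functor C D) (R : Functor D C)
  (eta : forall X, hom X (fob R (fob L X))) (Y : ob D) :
  hom (fob L (fob R Y)) (fob L (fob R (fob L (fob R Y)))) :=
  fmap L (eta (fob R Y)).

Definition is_coalgebra {C D : Category} (L : Functor C D) (R : Functor D C)
  (eta : forall X, hom X (fob R (fob L X)))
  (eps : forall Y, hom (fob L (fob R Y)) Y)
  (Y : ob D) (c : hom Y (fob L (fob R Y))) : Prop :=
  comp (eps Y) c = idm Y /\
  comp (cmd_delta L R eta Y) c = comp (fmap L (fmap R c)) c.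

Definition is_coalg_hom {C D : Category} (L : Functor C D) (R : Functor D C)
  {Y Y' : ob D} (c : hom Y (fob L (fob R Y))) (c' : hom Y' (fob L (fob R Y')))
  (h : hom Y Y') : Prop :=
  comp (fmap L (fmap R h)) c = comp c' h.

Definition boxK {C D : Category} (P : Doctrine C) (Q : Doctrine D)
  (L : Functor C D) (R : Functor D C)
  (lam : forall X, pcar (dob P X) -> pcar (dob Q (fob L X)))
  (rho : forall Y, pcar (dob Q Y) -> pcar (dob P (fob R Y)))
  (Y : ob D) (c : hom Y (fob L (fob R Y))) (a : pcar (dob Q Y)) : pcar (dob Q Y) :=
  reidx Q c (lam (fob R Y) (rho Y a)).

Definition boxA {C D : Category} (P : Doctrine C) (Q : Doctrine D)
  (L : Functor C D) (R : Functor D C)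
  (eta : forall X, hom X (fob R (fob L X)))
  (lam : forall X, pcar (dob P X) -> pcar (dob Q (fob L X)))
  (rho : forall Y, pcar (dob Q Y) -> pcar (dob P (fob R Y)))
  (X : ob C) (a : pcar (dob Q (fob L X))) : pcar (dob Q (fob L X)) :=
  lam X (reidx P (eta X) (rho (fob L X) a)).


(* The coalgebra laws for (L X, L eta_X), and the fact that L f is a coalgebra map,
   are the triangle identity and L applied to the naturality of eta. The two interior
   operators agree at K X because naturality of lam turns reindexing along eta_X in P
   into reindexing along L eta_X in Q. *)

Lemma fmap_comp_eq {C D : Category} (F : Functor C D) {X Y Y' Z : ob C}
  (f : hom X Y) (g : hom Y Z) (f' : hom X Y') (g' : hom Y' Z) :
  comp g f = comp g' f' -> comp (fmap F g) (fmap F f) = comp (fmap F g') (fmap F f').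
Proof.
  intros Heq. rewrite <- !fmap_comp. now f_equal.
Qed.

Section Comparison.

Variables (C D : Category) (L : Functor C D) (R : Functor D C).
Variable eta : forall X, hom X (fob R (fob L X)).
Variable eps : forall Y, hom (fob L (fob R Y)) Y.

Hypothesis eta_natural :
  forall X X' (f : hom X X'), comp (fmap R (fmap L f)) (eta X) = comp (eta X') f.

Lemma comparison_coalg_hom X X' (f : hom X X') :
  is_coalg_hom L R (fmap L (eta X)) (fmap L (eta X')) (fmap L f).
Proof.
  unfold is_coalg_hom. apply fmap_comp_eq, eta_natural.
Qed.

Hypothesis triangle_L : forall X, comp (eps (fob L X)) (fmap L (eta X)) = idm (fob L X).

Lemma comparison_coalgebra X : is_coalgebra L R eta eps (fob L X) (fmap L (eta X)).
Proof.
  split.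
  - apply triangle_L.
  - unfold cmd_delta. apply fmap_comp_eq. symmetry. apply eta_natural.
Qed.

End Comparison.

Lemma boxA_eq_boxK {C D : Category} (P : Doctrine C) (Q : Doctrine D)
  (L : Functor C D) (R : Functor D C)
  (eta : forall X, hom X (fob R (fob L X)))
  (lam : forall X, pcar (dob P X) -> pcar (dob Q (fob L X)))
  (rho : forall Y, pcar (dob Q Y) -> pcar (dob P (fob R Y))) :
  idx_nat P Q L lam ->
  forall X (a : pcar (dob Q (fob L X))),
    boxA P Q L R eta lam rho X a = boxK P Q L R lam rho (fob L X) (fmap L (eta X)) a.
Proof.
  intros [_ lam_natural] X a. apply lam_natural.
Qed.

Theorem proposition7p1 (C D : Category) (P : Doctrine C) (Q : Doctrine D)
  (L : Functor C D) (R : Functor D C)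
  (eta : forall X, hom X (fob R (fob L X)))
  (eps : forall Y, hom (fob L (fob R Y)) Y)
  (lam : forall X, pcar (dob P X) -> pcar (dob Q (fob L X)))
  (rho : forall Y, pcar (dob Q Y) -> pcar (dob P (fob R Y)))
  (Hadj : IdxAdjunction P Q L R eta eps lam rho) :
  (* K X = (L X, L eta_X) is a coalgebra *)
  (forall X, is_coalgebra L R eta eps (fob L X) (fmap L (eta X))) /\
  (* K f = L f is a coalgebra morphism K X -> K X' *)
  (forall X X' (f : hom X X'),
      is_coalg_hom L R (fmap L (eta X)) (fmap L (eta X')) (fmap L f)) /\
  (* K preserves identities and composition *)
  (forall X, fmap L (idm X) = idm (fob L X)) /\
  (forall X Y Z (f : hom X Y) (g : hom Y Z), fmap L (comp g f) = comp (fmap L g) (fmap L f)) /\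
  (* id : Q o L^op => Q o U^op o K^op is monotone and natural *)
  (forall X (a b : pcar (dob Q (fob L X))), ple a b -> ple a b) /\
  (forall X X' (f : hom X X') (b : pcar (dob Q (fob L X'))),
      reidx Q (fmap L f) b = reidx Q (fmap L f) b) /\
  (* box^A = box^K K *)
  (forall X (a : pcar (dob Q (fob L X))),
      boxA P Q L R eta lam rho X a = boxK P Q L R lam rho (fob L X) (fmap L (eta X)) a).
Proof.
  destruct Hadj as (eta_natural & _ & triangle_L & _ & lam_nat & _).
  split; [| split; [| split; [| split; [| split; [| split]]]]].
  - now apply comparison_coalgebra.
  - now apply comparison_coalg_hom.
  - apply fmap_id.
  - apply fmap_comp.
  - trivial.
  - reflexivity.
  - now apply boxA_eq_boxK.
Qed.
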